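(* Assume $\mathrm{Unif}(\mathcal S)$ and $\mathfrak d=\mathfrak c$. Then there exists a strong measure zero set $X\subseteq\mathbb R$ with $|X|=\mathfrak c$.
   Context: $\mathfrak c=2^{\aleph_0}$. A set $X\subseteq\mathbb R$ has strong measure zero if for every sequence $\langle\varepsilon_i:i<\omega\rangle$ of positive reals there is a sequence $\langle x_i:i<\omega\rangle$ of reals with $X\subseteq\bigcup_{i<\omega}(x_i-\varepsilon_i,x_i+\varepsilon_i)$. $\mathcal S$ denotes the ideal of strong measure zero sets. $\mathrm{Unif}(\mathcal S)$ is the statement ''every set of reals of cardinality less than $\mathfrak c$ has strong measure zero''. $\mathfrak d$ is the least cardinality of a family $\mathcal H\subseteq\omega^\omega$ such that for every $g\in\omega^\omega$ there is $h\in\mathcal H$ with $g(n)<h(n)$ for all $n$. *)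

From Stdlib Require Import Reals.
Open Scope R_scope.

Definition card_le {S T : Type} (A : S -> Prop) (B : T -> Prop) : Prop :=
  exists f : S -> T, (forall x, A x -> B (f x)) /\
    (forall x y, A x -> A y -> f x = f y -> x = y).

Definition card_eq {S T : Type} (A : S -> Prop) (B : T -> Prop) : Prop :=
  exists f : S -> T, (forall x, A x -> B (f x)) /\
    (forall x y, A x -> A y -> f x = f y -> x = y) /\
    (forall y, B y -> exists x, A x /\ f x = y).

Definition card_lt {S T : Type} (A : S -> Prop) (B : T -> Prop) : Prop :=
  card_le A B /\ ~ card_le B A.

Definition setR : R -> Prop := fun _ => True.

Definition strong_measure_zero (X : R -> Prop) : Prop :=
  forall eps : nat -> R, (forall i, 0 < eps i) ->
    exists x : nat -> R, forall y, X y ->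
      exists i, x i - eps i < y /\ y < x i + eps i.

Definition Unif_S : Prop :=
  forall X : R -> Prop, card_lt X setR -> strong_measure_zero X.

Definition dominating (H : (nat -> nat) -> Prop) : Prop :=
  forall g : nat -> nat, exists h, H h /\ forall n, (g n < h n)%nat.

(* d = c: since d <= c always holds, d = c means every dominating family
   has cardinality at least c. *)
Definition d_eq_c : Prop :=
  forall H : (nat -> nat) -> Prop, dominating H -> card_le setR H.

(* Code every g : nat -> nat by a real [code g] (a ternary expansion whose
   digits 1 are separated by g(0), g(1), ... zeros).  Its finite truncations,
   indexed by codes of finite prefixes, form countably many centres, and
   [code g] is within (1/2)3^(-k) of its n-th truncation once g(n) >= k.
   Well-order the continuum in order type c and pick, by transfinite recursion,
   sequences [escaping_seq a] not dominated by certain "barriers" of earlier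
   indices; d = c makes this possible since fewer than c functions never
   dominate.  Let X be the set of their codes.  Given epsilons, fix precisions
   k and an index b encoding k.  Every later a escapes the barrier of b, which
   forces g(n) >= k(j) for g = escaping_seq a at some prefix code j, so the
   code of g lies in the j-th centre's epsilon-interval; the fewer than c points
   with earlier index are covered by Unif(S), and one interval covers b. *)

From Stdlib Require Import Reals Lra Lia FunctionalExtensionality List Arith Cantor.
From Stdlib Require Import ClassicalEpsilon Classical.
From Coquelicot Require Import Coquelicot.
From mathcomp Require ssreflect ssrbool eqtype boolp wochoice.

Open Scope R_scope.

Lemma inv3_pow_pos (n : nat) : 0 < (/3) ^ n.
Proof. apply pow_lt; lra. Qed.

Lemma inv3_pow_le (m n : nat) : (m <= n)%nat -> (/3) ^ n <= (/3) ^ m.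
Proof.
  induction 1 as [|n _ IH]; [lra|].
  simpl; pose proof (inv3_pow_pos n); lra.
Qed.

Lemma inv3_pow_small (r : R) : 0 < r -> exists m, (/3) ^ m < r.
Proof.
  intro Hr.
  destruct (pow_lt_1_zero (/3) ltac:(rewrite Rabs_pos_eq; lra) r Hr) as [m Hm].
  exists m; specialize (Hm m (le_n m)).
  rewrite Rabs_pos_eq in Hm; [exact Hm | left; apply inv3_pow_pos].
Qed.

Definition ternary (e : nat -> nat) : R := Series (fun n => (/3) ^ e n).

Definition ternary_tail (e : nat -> nat) (n : nat) : R :=
  Series (fun k => (/3) ^ e (n + k)%nat).

Fixpoint ternary_partial (e : nat -> nat) (n : nat) : R :=
  match n with
  | 0 => 0
  | S m => ternary_partial e m + (/3) ^ e m
  end.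

Definition increasing (e : nat -> nat) : Prop := forall n, (e n < e (S n))%nat.

Lemma ternary_partial_prefix (e e' : nat -> nat) (n : nat) :
  (forall i, (i < n)%nat -> e i = e' i) -> ternary_partial e n = ternary_partial e' n.
Proof.
  induction n as [|n IH]; intro Hee'; simpl; [reflexivity|].
  rewrite IH by (intros; apply Hee'; lia).
  rewrite (Hee' n) by lia; reflexivity.
Qed.

Lemma Series_nonneg (a : nat -> R) : (forall n, 0 <= a n) -> ex_series a -> 0 <= Series a.
Proof.
  intros Ha Hex.
  rewrite <- (Rmult_0_l (Series a)), <- Series_scal_l.
  apply Series_le; [intro n; rewrite Rmult_0_l; split; [lra | apply Ha] | exact Hex].
Qed.

Section Ternary.

Variable e : nat -> nat.
Hypothesis e_incr : increasing e.

Lemma ternary_term_shift (n k : nat) : (/3) ^ e (n + k)%nat <= (/3) ^ e n * (/3) ^ k.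
Proof.
  induction k as [|k IH].
  - rewrite Nat.add_0_r; simpl; lra.
  - rewrite Nat.add_succ_r.
    apply Rle_trans with ((/3) ^ S (e (n + k)%nat)); [apply inv3_pow_le, e_incr|].
    simpl; pose proof (inv3_pow_pos (e (n + k)%nat)); nra.
Qed.

Lemma ex_series_ternary_tail (n : nat) : ex_series (fun k => (/3) ^ e (n + k)%nat).
Proof.
  apply (@ex_series_le R_AbsRing R_CompleteNormedModule _ (fun k => (/3) ^ k * (/3) ^ e n)).
  - intro k; change norm with Rabs; cbv beta.
    rewrite Rabs_pos_eq by (left; apply inv3_pow_pos).
    rewrite Rmult_comm; apply ternary_term_shift.
  - apply ex_series_scal_r, ex_series_geom; rewrite Rabs_pos_eq; lra.
Qed.

Lemma ternary_tail_bounds (n : nat) :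
  (/3) ^ e n <= ternary_tail e n <= 3 / 2 * (/3) ^ e n.
Proof.
  split.
  - unfold ternary_tail; rewrite Series_incr_1 by apply ex_series_ternary_tail.
    rewrite Nat.add_0_r.
    enough (0 <= Series (fun k => (/3) ^ e (n + S k)%nat)) by lra.
    apply Series_nonneg; [intro; left; apply inv3_pow_pos|].
    apply (ex_series_ext (fun k => (/3) ^ e (S n + k)%nat)); [intro k; now rewrite Nat.add_succ_r|].
    apply ex_series_ternary_tail.
  - apply Rle_trans with (Series (fun k => (/3) ^ k * (/3) ^ e n)).
    + apply Series_le.
      * intro k; rewrite Rmult_comm; split; [left; apply inv3_pow_pos | apply ternary_term_shift].
      * apply ex_series_scal_r, ex_series_geom; rewrite Rabs_pos_eq; lra.
    + rewrite Series_scal_r, Series_geom by (rewrite Rabs_pos_eq; lra); lra.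
Qed.

Lemma ternary_split (n : nat) : ternary e = ternary_partial e n + ternary_tail e n.
Proof.
  induction n as [|n IH]; simpl.
  - rewrite Rplus_0_l; reflexivity.
  - rewrite IH, Rplus_assoc; unfold ternary_tail.
    rewrite (Series_incr_1 (fun k => _)) by apply ex_series_ternary_tail.
    rewrite Nat.add_0_r; do 2 f_equal.
    apply Series_ext; intro k; now rewrite Nat.add_succ_r.
Qed.

End Ternary.

Lemma ternary_lt_of_lex (e e' : nat -> nat) (n : nat) :
  increasing e -> increasing e' ->
  (forall i, (i < n)%nat -> e i = e' i) -> (e n < e' n)%nat -> ternary e' < ternary e.
Proof.
  intros He He' Hpre Hn.
  rewrite (ternary_split e He n), (ternary_split e' He' n), (ternary_partial_prefix e e' n Hpre).
  destruct (ternary_tail_bounds e He n) as [Hlo _].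
  destruct (ternary_tail_bounds e' He' n) as [_ Hhi].
  pose proof (inv3_pow_le (S (e n)) (e' n) Hn) as Hpow; simpl in Hpow.
  pose proof (inv3_pow_pos (e n)); lra.
Qed.

Lemma ternary_inj (e e' : nat -> nat) :
  increasing e -> increasing e' -> ternary e = ternary e' -> e = e'.
Proof.
  intros He He' Heq; extensionality n.
  induction n as [n IH] using lt_wf_ind.
  destruct (Nat.lt_trichotomy (e n) (e' n)) as [Hlt | [Heqn | Hgt]]; [|exact Heqn|].
  - pose proof (ternary_lt_of_lex e e' n He He' IH Hlt); lra.
  - pose proof (ternary_lt_of_lex e' e n He' He (fun i Hi => eq_sym (IH i Hi)) Hgt); lra.
Qed.

Fixpoint code_exps (g : nat -> nat) (n : nat) : nat :=
  match n with
  | 0 => S (g 0%nat)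
  | S m => S (code_exps g m + g (S m))
  end.

Definition code (g : nat -> nat) : R := ternary (code_exps g).

Definition code_partial (g : nat -> nat) (n : nat) : R := ternary_partial (code_exps g) n.

Lemma code_exps_increasing (g : nat -> nat) : increasing (code_exps g).
Proof. intro n; simpl; lia. Qed.

Lemma code_exps_gt (g : nat -> nat) (n : nat) : (g n < code_exps g n)%nat.
Proof. destruct n; simpl; lia. Qed.

Lemma code_exps_prefix (g g' : nat -> nat) (m : nat) :
  (forall i, (i <= m)%nat -> g i = g' i) -> code_exps g m = code_exps g' m.
Proof.
  induction m as [|m IH]; intro Hgg'; simpl.
  - rewrite (Hgg' 0%nat) by lia; reflexivity.
  - rewrite IH by (intros; apply Hgg'; lia).
    rewrite (Hgg' (S m)) by lia; reflexivity.
Qed.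

Lemma code_exps_inj (g g' : nat -> nat) : code_exps g = code_exps g' -> g = g'.
Proof.
  intro Heq; extensionality n.
  destruct n as [|m].
  - pose proof (f_equal (fun f => f 0%nat) Heq); simpl in *; lia.
  - pose proof (f_equal (fun f => f m) Heq); pose proof (f_equal (fun f => f (S m)) Heq).
    simpl in *; lia.
Qed.

Lemma code_inj (g g' : nat -> nat) : code g = code g' -> g = g'.
Proof.
  intro Heq; apply code_exps_inj, ternary_inj; auto using code_exps_increasing.
Qed.

Lemma code_partial_prefix (g g' : nat -> nat) (n : nat) :
  (forall i, (i < n)%nat -> g i = g' i) -> code_partial g n = code_partial g' n.
Proof.
  intro Hpre; apply ternary_partial_prefix.
  intros i Hi; apply code_exps_prefix; intros; apply Hpre; lia.
Qed.

Lemma code_approx (g : nat -> nat) (n k : nat) : (k <= g n)%nat ->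
  code_partial g n <= code g <= code_partial g n + / 2 * (/3) ^ k.
Proof.
  intro Hk; unfold code, code_partial.
  rewrite (ternary_split _ (code_exps_increasing g) n).
  destruct (ternary_tail_bounds _ (code_exps_increasing g) n) as [Hlo Hhi].
  pose proof (inv3_pow_le (S k) (code_exps g n)) as Hpow.
  pose proof (code_exps_gt g n); pose proof (inv3_pow_pos (code_exps g n)).
  simpl in Hpow; specialize (Hpow ltac:(lia)); lra.
Qed.

Fixpoint prefix_code (g : nat -> nat) (n : nat) : nat :=
  match n with
  | 0 => 0%nat
  | S m => S (Cantor.to_nat (g m, prefix_code g m))
  end.

Lemma prefix_code_inj (g g' : nat -> nat) (n n' : nat) :
  prefix_code g n = prefix_code g' n' -> n = n' /\ forall i, (i < n)%nat -> g i = g' i.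
Proof.
  revert n'; induction n as [|n IH]; intros [|n'] Heq; cbn [prefix_code] in Heq; try discriminate.
  - split; [reflexivity | intros; lia].
  - apply Nat.succ_inj, (f_equal Cantor.of_nat) in Heq.
    rewrite !Cantor.cancel_of_to in Heq; injection Heq as Hlast Hrest.
    destruct (IH n' Hrest) as [-> Hpre]; split; [reflexivity|].
    intros i Hi; destruct (Nat.eq_dec i n') as [->|]; [exact Hlast | apply Hpre; lia].
Qed.

Definition centre (j : nat) : R :=
  let p := epsilon (inhabits ((fun _ => 0%nat), 0%nat))
                   (fun p : (nat -> nat) * nat => prefix_code (fst p) (snd p) = j) in
  code_partial (fst p) (snd p).

Lemma centre_prefix_code (g : nat -> nat) (n : nat) :
  centre (prefix_code g n) = code_partial g n.
Proof.
  unfold centre; set (p := epsilon _ _).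
  assert (Hp : prefix_code (fst p) (snd p) = prefix_code g n)
    by (apply epsilon_spec; exists (g, n); reflexivity).
  destruct (prefix_code_inj _ _ _ _ Hp) as [-> Hpre].
  apply code_partial_prefix; exact Hpre.
Qed.

(* [prefix_tree k n] lists the codes of all length-[n] prefixes [s] with
   [s i < k (code of s restricted to i)] for every [i < n]. *)
Fixpoint prefix_tree (k : nat -> nat) (n : nat) : list nat :=
  match n with
  | 0 => 0%nat :: nil
  | S m => flat_map (fun c => map (fun v => S (Cantor.to_nat (v, c))) (seq 0 (k c)))
                    (prefix_tree k m)
  end.

Definition tree_bound (k : nat -> nat) (n : nat) : nat := list_max (map k (prefix_tree k n)).

Lemma prefix_code_in_tree (k h : nat -> nat) (n : nat) :
  (forall i, (i < n)%nat -> (h i < k (prefix_code h i))%nat) ->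
  In (prefix_code h n) (prefix_tree k n).
Proof.
  induction n as [|n IH]; intro Hbelow; simpl; [now left|].
  apply in_flat_map; exists (prefix_code h n); split; [apply IH; intros; apply Hbelow; lia|].
  apply in_map_iff; exists (h n); split; [reflexivity|].
  apply in_seq; specialize (Hbelow n); lia.
Qed.

Lemma tree_bound_ge (k : nat -> nat) (n c : nat) :
  In c (prefix_tree k n) -> (k c <= tree_bound k n)%nat.
Proof.
  intro Hc; unfold tree_bound.
  pose proof (proj1 (list_max_le (map k (prefix_tree k n)) _) (le_n _)) as Hall.
  rewrite Forall_forall in Hall; apply Hall, in_map, Hc.
Qed.

Lemma escape_tree_bound (k h : nat -> nat) :
  (exists n, (tree_bound k n <= h n)%nat) -> exists n, (k (prefix_code h n) <= h n)%nat.
Proof.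
  intros [n Hn]; apply NNPP; intro Hnone.
  assert (Hbelow : forall i, (h i < k (prefix_code h i))%nat).
  { intro i; apply NNPP; intro; apply Hnone; exists i; lia. }
  pose proof (tree_bound_ge k n _ (prefix_code_in_tree k h n (fun i _ => Hbelow i))).
  specialize (Hbelow n); lia.
Qed.

Definition interleave (u : nat -> R) (p : R) (v : nat -> R) (i : nat) : R :=
  match i with
  | 0 => p
  | S i' => if Nat.even i' then u (Nat.div2 i') else v (Nat.div2 i')
  end.

Lemma interleave_left (u : nat -> R) (p : R) (v : nat -> R) (j : nat) :
  interleave u p v (S (2 * j)) = u j.
Proof. cbn [interleave]; now rewrite Nat.even_even, Nat.div2_double. Qed.

Lemma interleave_right (u : nat -> R) (p : R) (v : nat -> R) (j : nat) :
  interleave u p v (S (S (2 * j))) = v j.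
Proof.
  cbn [interleave]; rewrite Nat.div2_succ_double.
  replace (S (2 * j)) with (2 * j + 1)%nat by lia; now rewrite Nat.even_odd.
Qed.

Lemma card_le_subset {S T : Type} (A : S -> Prop) (B B' : T -> Prop) :
  (forall x, B x -> B' x) -> card_le A B -> card_le A B'.
Proof. intros HBB' [f [Hf Hinj]]; exists f; split; auto. Qed.

Lemma card_le_of_image {T U : Type} (Q : T -> Prop) (F : T -> U) :
  card_le setR (fun u => exists t, Q t /\ u = F t) -> card_le setR Q.
Proof.
  intros [f [Hf Hinj]].
  destruct (choice (fun r t => Q t /\ f r = F t) (fun r => Hf r I)) as [pick Hpick].
  exists pick; split; [intros r _; apply Hpick|].
  intros r r' _ _ Heq; apply Hinj; [exact I | exact I|].
  rewrite (proj2 (Hpick r)), (proj2 (Hpick r')), Heq; reflexivity.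
Qed.

Lemma small_family_undominated {T : Type} (Q : T -> Prop) (F : T -> nat -> nat) :
  d_eq_c -> ~ card_le setR Q -> exists g, forall t, Q t -> exists n, (F t n <= g n)%nat.
Proof.
  intros Hd Hsmall; apply NNPP; intro Hnone.
  apply Hsmall, (card_le_of_image Q F), Hd.
  intro g; apply NNPP; intro Hg; apply Hnone; exists g.
  intros t Ht; apply NNPP; intro Hnt; apply Hg.
  exists (F t); split; [exists t; split; auto|].
  intro n; apply Nat.nle_gt; intro; apply Hnt; exists n; assumption.
Qed.

Lemma well_founded_minimal {T : Type} (lt : T -> T -> Prop) (P : T -> Prop) :
  well_founded lt -> (exists t, P t) -> exists t, P t /\ forall u, lt u t -> ~ P u.
Proof.
  intros Hwf [t0 Ht0]; apply NNPP; intro Hnone.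
  induction t0 as [t IH] using (well_founded_ind Hwf).
  apply Hnone; exists t; split; [exact Ht0|].
  intros u Hu Pu; exact (IH u Hu Pu).
Qed.

Module WellOrdering.
Import ssreflect ssrbool eqtype boolp wochoice.

Lemma exists_well_founded_total_order (T : Type) :
  exists lt : T -> T -> Prop, well_founded lt /\ forall a b, a = b \/ lt a b \/ lt b a.
Proof.
have [R Rwo] := well_ordering_principle {classic T}.
have Rchain : wo_chain R predT by move=> A _; exact: Rwo.
have Rtot := wo_chainW Rchain; have Ranti := wo_chain_antisymmetric Rchain.
exists (fun a b => R a b /\ a <> b); split.
- move=> x; apply: contrapT => nAx.
  have [|z [[/negP zin zmin] _]] := Rwo [pred y | ~~ `[< Acc (fun a b => R a b /\ a <> b) y >]].
    by exists x; apply/negP => /asboolP.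
  apply/zin/asboolP; constructor => y [Ryz nyz]; apply: contrapT => nAy.
  by apply/nyz/Ranti => //; rewrite Ryz zmin //; apply/negP => /asboolP.
- move=> a b; have [->|nab] := @eqVneq {classic T} a b; [by left | right].
  have /orP[Rab|Rba] := Rtot a b isT isT.
  + by left; split=> //; apply/eqP.
  + by right; split=> //; apply/eqP; rewrite eq_sym.
Qed.
End WellOrdering.

(* [D] ordered by [lt] is the initial ordinal of the continuum. *)
Lemma initial_ordinal_continuum :
  exists (lt : R -> R -> Prop) (D : R -> Prop) (iota : R -> R),
    well_founded lt /\ (forall a b, a = b \/ lt a b \/ lt b a) /\
    (forall r, D (iota r)) /\ (forall r r', iota r = iota r' -> r = r') /\
    (forall a, D a -> ~ card_le setR (fun b => D b /\ lt b a)).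
Proof.
  destruct (WellOrdering.exists_well_founded_total_order R) as [lt [Hwf Htot]].
  exists lt.
  destruct (classic (exists t, card_le setR (fun b => lt b t))) as [Hlong | Hshort].
  - destruct (well_founded_minimal lt _ Hwf Hlong) as [t [[f [Hf Hinj]] Hmin]].
    exists (fun b => lt b t), f.
    split; [exact Hwf|]; split; [exact Htot|]; split; [intro r; exact (Hf r I)|].
    split; [intros r r'; apply Hinj; exact I|].
    intros a Ha Hc; apply (Hmin a Ha).
    eapply card_le_subset; [|exact Hc]; intros b [_ Hb]; exact Hb.
  - exists (fun _ => True), (fun r => r).
    split; [exact Hwf|]; split; [exact Htot|]; split; [intro; exact I|].
    split; [intros r r' Heq; exact Heq|].
    intros a _ Hc; apply Hshort; exists a.
    eapply card_le_subset; [|exact Hc]; intros b [_ Hb]; exact Hb.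
Qed.

Section Construction.

Variable lt : R -> R -> Prop.
Hypothesis lt_wf : well_founded lt.
Hypothesis lt_total : forall a b, a = b \/ lt a b \/ lt b a.
Variable D : R -> Prop.
Variable iota : R -> R.
Hypothesis iota_D : forall r, D (iota r).
Hypothesis iota_inj : forall r r', iota r = iota r' -> r = r'.
Hypothesis segment_small : forall a, D a -> ~ card_le setR (fun b => D b /\ lt b a).
Hypothesis d_c : d_eq_c.
Hypothesis unif : Unif_S.

Definition index_seq (b : R) : nat -> nat :=
  epsilon (inhabits (fun _ => 0%nat)) (fun k => iota (code k) = b).

Lemma index_seq_iota_code (k : nat -> nat) : index_seq (iota (code k)) = k.
Proof.
  apply code_inj, iota_inj; unfold index_seq.
  apply (epsilon_spec _ (fun k' => iota (code k') = iota (code k))); now exists k.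
Qed.

(* The [S (g n)] component makes later sequences differ from earlier ones; the
   [tree_bound] component makes them escape the precisions encoded by [b]. *)
Definition barrier (b : R) (g : nat -> nat) (n : nat) : nat :=
  Nat.max (tree_bound (index_seq b) n) (S (g n)).

Definition escaping_step (a : R) (seq_below : forall b, lt b a -> nat -> nat) : nat -> nat :=
  epsilon (inhabits (fun _ => 0%nat))
    (fun g => forall b (Hb : lt b a), D b ->
       exists n, (barrier b (seq_below b Hb) n <= g n)%nat).

Definition escaping_seq : R -> nat -> nat := Fix lt_wf (fun _ => nat -> nat) escaping_step.

Lemma escaping_seq_unfold (a : R) :
  escaping_seq a = escaping_step a (fun b _ => escaping_seq b).
Proof.
  apply (Fix_eq lt_wf (fun _ => nat -> nat) escaping_step).
  intros x f f' Hff'.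
  replace f' with f by (extensionality y; extensionality Hy; apply Hff'); reflexivity.
Qed.

Lemma escaping_seq_escapes (a b : R) : D a -> D b -> lt b a ->
  exists n, (barrier b (escaping_seq b) n <= escaping_seq a n)%nat.
Proof.
  intros Da Db Hba; revert b Db Hba.
  rewrite escaping_seq_unfold; unfold escaping_step.
  intros b Db Hba; revert b Hba Db; apply epsilon_spec.
  destruct (small_family_undominated (fun b => D b /\ lt b a)
              (fun b => barrier b (escaping_seq b)) d_c (segment_small a Da)) as [g Hg].
  exists g; intros b Hb Db; apply Hg; split; assumption.
Qed.

Lemma escaping_seq_inj (a b : R) : D a -> D b -> escaping_seq a = escaping_seq b -> a = b.
Proof.
  intros Da Db Heq.
  destruct (lt_total a b) as [-> | [Hab | Hba]]; [reflexivity | exfalso | exfalso].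
  - destruct (escaping_seq_escapes b a Db Da Hab) as [n Hn].
    unfold barrier in Hn; rewrite Heq in Hn; lia.
  - destruct (escaping_seq_escapes a b Da Db Hba) as [n Hn].
    unfold barrier in Hn; rewrite Heq in Hn; lia.
Qed.

Lemma code_escaping_seq_near_centre (k : nat -> nat) (a : R) :
  D a -> lt (iota (code k)) a ->
  exists j, centre j <= code (escaping_seq a) <= centre j + / 2 * (/3) ^ k j.
Proof.
  intros Da Hlt.
  destruct (escaping_seq_escapes a _ Da (iota_D _) Hlt) as [n Hn].
  unfold barrier in Hn; rewrite index_seq_iota_code in Hn.
  destruct (escape_tree_bound k (escaping_seq a)) as [m Hm]; [exists n; lia|].
  exists (prefix_code (escaping_seq a) m); rewrite centre_prefix_code.
  exact (code_approx _ m _ Hm).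
Qed.

Lemma code_segment_small (b : R) : D b ->
  card_lt (fun x => exists a, (D a /\ lt a b) /\ x = code (escaping_seq a)) setR.
Proof.
  intro Db; split.
  - exists (fun x => x); split; [intros; exact I | intros x y _ _ Heq; exact Heq].
  - intro Hc; apply (segment_small b Db), (card_le_of_image _ (fun a => code (escaping_seq a))), Hc.
Qed.

Definition witness_set (x : R) : Prop := exists r, x = code (escaping_seq (iota r)).

Lemma witness_set_card : card_eq witness_set setR.
Proof.
  assert (Hembed : forall r r',
            code (escaping_seq (iota r)) = code (escaping_seq (iota r')) -> r = r')
    by (intros r r' Heq; apply iota_inj, escaping_seq_inj, code_inj; auto).
  destruct (choice (fun x r => witness_set x -> x = code (escaping_seq (iota r)))) as [f Hf].
  { intro x; destruct (classic (witness_set x)) as [[r Hr] | Hx];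
      [exists r; auto | exists 0; tauto]. }
  exists f; split; [intros; exact I|]; split.
  - intros x y Hx Hy Heq; rewrite (Hf x Hx), (Hf y Hy), Heq; reflexivity.
  - intros r _; exists (code (escaping_seq (iota r))); split; [now exists r|].
    symmetry; apply Hembed; rewrite <- Hf; [reflexivity | now exists r].
Qed.

(* In the cover, position 0 is the code at index [b], odd positions are the
   centres and the other even positions cover the points of index below [b]. *)
Lemma witness_set_smz : strong_measure_zero witness_set.
Proof.
  intros eps Heps.
  destruct (choice (fun j m => (/3) ^ m < eps (S (2 * j)))) as [k Hk].
  { intro j; apply inv3_pow_small, Heps. }
  set (b := iota (code k)).
  destruct (unif _ (code_segment_small b (iota_D _)) (fun i => eps (S (S (2 * i))))
              (fun i => Heps _)) as [z Hz].
  exists (interleave centre (code (escaping_seq b)) z).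
  intros y [r ->]; set (a := iota r).
  destruct (lt_total a b) as [Hab | [Hab | Hba]].
  - exists 0%nat; simpl; rewrite Hab; pose proof (Heps 0%nat); lra.
  - destruct (Hz (code (escaping_seq a))) as [i Hi].
    { exists a; split; [split; [apply iota_D | exact Hab] | reflexivity]. }
    exists (S (S (2 * i))); rewrite interleave_right; exact Hi.
  - destruct (code_escaping_seq_near_centre k a (iota_D r) Hba) as [j Hj].
    exists (S (2 * j)); rewrite interleave_left.
    pose proof (Hk j); pose proof (inv3_pow_pos (k j)); lra.
Qed.

End Construction.

Theorem theorem0p11 :
  Unif_S -> d_eq_c ->
  exists X : R -> Prop, strong_measure_zero X /\ card_eq X setR.
Proof.
  intros unif d_c.
  destruct initial_ordinal_continuum
    as (lt & D & iota & lt_wf & lt_total & iota_D & iota_inj & segment_small).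
  exists (witness_set lt lt_wf D iota); split.
  - apply witness_set_smz; assumption.
  - apply witness_set_card; assumption.
Qed.
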